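(* Let $C_1,C_2$ be $d$-copulas admitting tail dependence functions with $C_1<_{TD}C_2$. Let $S\subset(0,\infty)^d$ be a cone (i.e. $\boldsymbol w\in S$ implies $\lambda\boldsymbol w\in S$ for all $\lambda>0$) such that $S\cup\{\boldsymbol 0\}$ is closed in $[0,\infty)^d$. Then there exists $\varepsilon>0$ such that $C_1(\boldsymbol u)\le C_2(\boldsymbol u)$ for all $\boldsymbol u\in S\cap B_\varepsilon(\boldsymbol 0)\cap[0,1]^d$.
   Context: A $d$-copula is a grounded, $d$-increasing function $C:[0,1]^d\to[0,1]$ with uniform margins. Its tail dependence function is $\Lambda(\boldsymbol w;C)=\lim_{s\searrow0}C(s\boldsymbol w)/s$ for $\boldsymbol w\in[0,\infty)^d$, assumed to exist for all $\boldsymbol w$. $C_1<_{TD}C_2$ means $\Lambda(\boldsymbol w;C_1)<\Lambda(\boldsymbol w;C_2)$ for all $\boldsymbol w\in(0,\infty)^d$. $B_\varepsilon(\boldsymbol 0)$ is the open Euclidean ball of radius $\varepsilon$ centred at $\boldsymbol 0$. *)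

From HB Require Import structures.
From mathcomp Require Import all_boot all_order all_algebra.
From mathcomp Require Import all_classical all_reals all_analysis.
Set Implicit Arguments. Unset Strict Implicit. Unset Printing Implicit Defensive.
Import Order.TTheory GRing.Theory Num.Theory.
Import numFieldNormedType.Exports.
Local Open Scope classical_set_scope.
Local Open Scope ring_scope.

Section Copulas.
Variables (R : realType) (d : nat).
Local Notation pt := ('I_d -> R).

Definition unit_cube (u : pt) : Prop := forall i, 0 <= u i <= 1.
Definition nonneg_orthant (w : pt) : Prop := forall i, 0 <= w i.
Definition pos_orthant (w : pt) : Prop := forall i, 0 < w i.

Definition zero_pt : pt := fun _ => 0.
Definition scale_pt (s : R) (w : pt) : pt := fun i => s * w i.

Definition enorm (u : pt) : R := Num.sqrt (\sum_(i < d) u i ^+ 2).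
Definition edist (u v : pt) : R := enorm (fun i => u i - v i).
Definition eball0 (eps : R) (u : pt) : Prop := enorm u < eps.

Definition vertex (a b : pt) (e : {ffun 'I_d -> bool}) : pt :=
  fun i => if e i then b i else a i.

Definition cvolume (C : pt -> R) (a b : pt) : R :=
  \sum_(e : {ffun 'I_d -> bool})
     (-1) ^+ #|[set i | ~~ e i]| * C (vertex a b e).

(* A d-copula: a function C : [0,1]^d -> [0,1] (values outside the cube are
   irrelevant) which is grounded, d-increasing and has uniform margins. *)
Definition is_copula (C : pt -> R) : Prop :=
  [/\ (forall u, unit_cube u -> 0 <= C u <= 1),
      (forall u, unit_cube u -> (exists i, u i = 0) -> C u = 0),
      (forall a b, unit_cube a -> unit_cube b -> (forall i, a i <= b i) ->
         0 <= cvolume C a b) &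
      (forall u i, unit_cube u -> (forall j, j != i -> u j = 1) -> C u = u i)].

Definition is_tdf (C : pt -> R) (Lam : pt -> R) : Prop :=
  forall w, nonneg_orthant w ->
    (fun s : R => C (scale_pt s w) / s) @ (0 : R)^'+ --> Lam w.

Definition td_lt (Lam1 Lam2 : pt -> R) : Prop :=
  forall w, pos_orthant w -> Lam1 w < Lam2 w.

Definition is_cone (S : set pt) : Prop :=
  forall w lam, S w -> 0 < lam -> S (scale_pt lam w).

Definition closed_in_orthant (A : set pt) : Prop :=
  forall w, nonneg_orthant w -> ~ A w ->
    exists2 del : R, 0 < del &
      forall v, nonneg_orthant v -> edist v w < del -> ~ A v.

End Copulas.

From Pilot Require Import Defs.
From HB Require Import structures.
From mathcomp Require Import all_boot all_order all_algebra.
From mathcomp Require Import all_classical all_reals all_analysis.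
From mathcomp Require Import lra.
Set Implicit Arguments.
Unset Strict Implicit.
Unset Printing Implicit Defensive.
Import Order.TTheory GRing.Theory Num.Theory.
Import numFieldNormedType.Exports ArrowAsProduct.
Local Open Scope classical_set_scope.
Local Open Scope ring_scope.

(* At a point w of the open orthant, Lam1 w < Lam2 w gives some eta in (0,1) with
   C1 (s (1 + eta) w) < C2 (s (1 - eta) w) for all small s > 0, since the left and
   right sides divided by s tend to (1 + eta) Lam1 w and (1 - eta) Lam2 w.  A copula
   is coordinatewise nondecreasing, so C1 (s v) <= C2 (s v) for every v between
   (1 - eta) w and (1 + eta) w.  The section K = S /\ {sum_i v_i = 1} of the cone is
   compact, because S \/ {0} is closed in the orthant and 0 is not in the hyperplane,
   so the threshold on s can be chosen uniformly on K.  Finally every u in S is s v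
   with v in K and s = sum_i u_i <= d |u|. *)

Section CopulaMonotone.
Variables (R : realType) (d : nat) (C : ('I_d -> R) -> R).
Hypothesis copC : is_copula C.

Lemma copula_le_coord (u v : 'I_d -> R) (i : 'I_d) :
  unit_cube u -> unit_cube v -> (forall j, j != i -> u j = v j) ->
  u i <= v i -> C u <= C v.
Proof.
case: copC => _ grounded increasing _ cube_u cube_v uv_off uv_i.
(* the C-volume of [lo, v] reduces to C v - C u: all other vertices have a 0 coordinate *)
pose lo : 'I_d -> R := fun j => if j == i then u i else 0.
have cube_lo : unit_cube lo by move=> j; rewrite /lo; case: ifP; rewrite ?lexx ?ler01.
have lo_v j : lo j <= v j.
  by rewrite /lo; case: eqP => [->|_] //; case/andP: (cube_v j).
have := increasing lo v cube_lo cube_v lo_v.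
pose eT : {ffun 'I_d -> bool} := [ffun _ => true].
pose eF : {ffun 'I_d -> bool} := [ffun j => j != i].
have eFT : eF != eT by apply/eqP => /ffunP/(_ i); rewrite !ffunE eqxx.
rewrite /cvolume (bigD1 eT) //= (bigD1 eF) //= big1 => [|e /andP[eT' eF']].
  have -> : #|[set j | ~~ eT j]| = 0%N.
    by apply: eq_card0 => j; apply/negbTE/negP; rewrite in_setE /= ffunE.
  have -> : #|[set j | ~~ eF j]| = 1%N.
    rewrite -(card1 i); apply: eq_card => j.
    by rewrite inE; apply/idP/idP; rewrite in_setE /= ffunE negbK.
  have -> : vertex lo v eT = v by apply: funext => j; rewrite /vertex ffunE.
  have -> : vertex lo v eF = u.
    apply: funext => j; rewrite /vertex ffunE /lo.
    by case: (eqVneq j i) => [->|ji] //=; rewrite uv_off.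
  by rewrite expr0 expr1 mul1r addr0 mulN1r subr_ge0.
have [j [ji ej]] : exists j, j != i /\ e j = false.
  apply: contrapT => /forallNP e_off.
  have e_true j : j != i -> e j.
    by move=> ji; apply/negPn/negP => /negbTE ej; exact: (e_off j).
  case: (boolP (e i)) => ei.
    move: eT'; apply/negP/negPn/eqP/ffunP => k; rewrite ffunE.
    by case: (eqVneq k i) => [->|/e_true].
  move: eF'; apply/negP/negPn/eqP/ffunP => k; rewrite ffunE.
  by case: (eqVneq k i) => [->|/e_true->]; rewrite ?(negbTE ei).
rewrite grounded ?mulr0 //.
  by move=> k; rewrite /vertex; case: (e k).
by exists j; rewrite /vertex ej /lo (negbTE ji).
Qed.

Lemma copula_le (x y : 'I_d -> R) :
  unit_cube x -> unit_cube y -> (forall i, x i <= y i) -> C x <= C y.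
Proof.
move=> cube_x cube_y xy.
pose p (k : nat) : 'I_d -> R := fun j => if (j < k)%N then y j else x j.
have cube_p k : unit_cube (p k) by move=> j; rewrite /p; case: ifP.
have x_p k : C x <= C (p k).
  elim: k => [|k IH].
    by have -> : p 0%N = x by apply: funext => j; rewrite /p ltn0.
  apply: (le_trans IH).
  have [kd|dk] := ltnP k d; last first.
    have -> // : p k.+1 = p k.
    apply: funext => j; rewrite /p.
    by rewrite (leq_trans (ltn_ord j) dk) (leq_trans (ltn_ord j) (leqW dk)).
  apply: (@copula_le_coord _ _ (Ordinal kd)) => //=; last by rewrite /p ltnn ltnSn.
  move=> j jk; rewrite /p ltnS [(j <= k)%N]leq_eqVlt.
  suff /negbTE-> : nat_of_ord j != k by [].
  by apply: contra jk => /eqP jk; apply/eqP/val_inj.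
have -> : y = p d by apply: funext => j; rewrite /p ltn_ord.
exact: x_p.
Qed.

End CopulaMonotone.

Section RightOfZero.
Variable R : realType.

Lemma at_right0_interval (P : R -> Prop) :
  (\forall t \near 0^'+, P t) -> exists2 e : R, 0 < e & forall t, 0 < t -> t < e -> P t.
Proof.
move=> /nbhs_normP[e /= e0 eP]; exists e => // t t0 te; apply: eP => //=.
by rewrite distrC subr0 gtr0_norm.
Qed.

Lemma mulr_cvg_at_right0 (c : R) : 0 < c -> (fun s => s * c) @ 0^'+ --> 0^'+.
Proof.
move=> c0 P /at_right0_interval[e e0 eP].
apply/nbhs_normP; exists (e / c) => /=; first by rewrite divr_gt0.
move=> t /=; rewrite distrC subr0 => te t0.
apply: eP; first exact: mulr_gt0.
by rewrite -ltr_pdivlMr // -(gtr0_norm t0).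
Qed.

End RightOfZero.

Section TailDependence.
Variables (R : realType) (d : nat) (C L : ('I_d -> R) -> R).
Hypothesis tdfC : is_tdf C L.

Lemma tdf_dilate (w : 'I_d -> R) (c : R) : nonneg_orthant w -> 0 < c ->
  (fun s => C (scale_pt (s * c) w) / s) @ 0^'+ --> c * L w.
Proof.
move=> w_ge0 c0.
have -> : (fun s => C (scale_pt (s * c) w) / s) =
    (fun s => c * (C (scale_pt s w) / s)) \o (fun s => s * c).
  by apply: funext => s /=; rewrite invfM mulrCA [c * _]mulrCA mulfV ?gt_eqF // mulr1.
apply: (cvg_comp _ _ (mulr_cvg_at_right0 c0)).
exact: cvgMl_tmp (tdfC w_ge0).
Qed.

End TailDependence.

Lemma dilation_gap (R : realFieldType) (a b : R) : a < b ->
  exists eta : R, [/\ 0 < eta, eta < 1 & (1 + eta) * a < (1 - eta) * b].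
Proof.
move=> ab; set M := `|a| + `|b| + (b - a).
have M0 : 0 < M by rewrite /M ltr_wpDl ?addr_ge0 // subr_gt0.
exists ((b - a) / (2 * M)); set eta := _ / _.
have eta0 : 0 < eta by rewrite divr_gt0 ?mulr_gt0 // subr_gt0.
have etaM : eta * (2 * M) = b - a by rewrite /eta divfK // gt_eqF ?mulr_gt0.
split => //.
  by rewrite ltr_pdivrMr ?mulr_gt0 // mul1r /M; have := normr_ge0 a; have := normr_ge0 b; lra.
have ha : eta * a <= eta * `|a| by rewrite ler_pM2l // ler_norm.
have hb : eta * b <= eta * `|b| by rewrite ler_pM2l // ler_norm.
have hab : 0 < eta * (b - a) by rewrite mulr_gt0 // subr_gt0.
have := mulr_ge0 (ltW eta0) (normr_ge0 a); have := mulr_ge0 (ltW eta0) (normr_ge0 b).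
rewrite /M in etaM; nra.
Qed.

Lemma tdf_dilate_lt (R : realType) (d : nat) (C1 C2 L1 L2 : ('I_d -> R) -> R)
    (w : 'I_d -> R) :
  is_tdf C1 L1 -> is_tdf C2 L2 -> nonneg_orthant w -> L1 w < L2 w ->
  exists eta : R, [/\ 0 < eta, eta < 1 &
    \forall s \near 0^'+, C1 (scale_pt (s * (1 + eta)) w) < C2 (scale_pt (s * (1 - eta)) w)].
Proof.
move=> tdf1 tdf2 w_ge0 /dilation_gap[eta [eta0 eta1 gap]]; exists eta; split => //.
have [pos_1Deta pos_1Beta] : 0 < 1 + eta /\ 0 < 1 - eta by split; lra.
near=> s.
have s_inv_gt0 : 0 < s^-1 by rewrite invr_gt0; near: s; exact: nbhs_right_gt.
rewrite -(ltr_pM2r s_inv_gt0) -subr_gt0; near: s.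
apply: (cvgr_gt _ (cvgB (tdf_dilate tdf2 w_ge0 pos_1Beta) (tdf_dilate tdf1 w_ge0 pos_1Deta))).
by rewrite subr_gt0.
Unshelve. all: by end_near.
Qed.

Section OrthantTopology.
Variables (R : realType) (d : nat).
Implicit Types (u v w : 'I_d -> R) (A : set ('I_d -> R)).

Lemma box_nbhs w (e : 'I_d -> R) : (forall i, 0 < e i) ->
  nbhs w [set v | forall i, `|v i - w i| < e i].
Proof.
move=> e_gt0.
have near_box := @filter_forall _ _ (fun i v => `|v i - w i| < e i) (nbhs w) _.
apply: near_box => i.
have near_wi : nbhs (w i) [set x : R | `|x - w i| < e i].
  by apply/nbhs_normP; exists (e i) => //= x; rewrite /ball_ /= distrC.
exact: (@proj_continuous _ (fun=> R) i w _ near_wi).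
Qed.

Lemma coord_le_enorm u i : `|u i| <= enorm u.
Proof.
rewrite /enorm -sqrtr_sqr ler_sqrt ?sumr_ge0 // => [|j _]; last exact: sqr_ge0.
by rewrite (bigD1 i) //= lerDl sumr_ge0 // => j _; exact: sqr_ge0.
Qed.

Lemma coord_le_sum u i : nonneg_orthant u -> u i <= \sum_(j < d) u j.
Proof. by move=> u_ge0; rewrite (bigD1 i) //= lerDl sumr_ge0. Qed.

Lemma sum_le_enorm u : \sum_(i < d) u i <= d%:R * enorm u.
Proof.
rewrite mulr_natl -[X in _ *+ X]card_ord -sumr_const; apply: ler_sum => i _.
exact: le_trans (ler_norm _) (coord_le_enorm u i).
Qed.

Lemma enorm_lt u (e : R) : 0 < e -> (forall i, `|u i| < e / d.+1%:R) -> enorm u < e.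
Proof.
move=> e_gt0 u_lt; set c := e / d.+1%:R.
have c_gt0 : 0 < c by rewrite divr_gt0.
have ec : e = d.+1%:R * c by rewrite /c mulrC divfK // pnatr_eq0.
have sum_le : \sum_(i < d) u i ^+ 2 <= d%:R * c ^+ 2.
  rewrite mulr_natl -[X in _ *+ X]card_ord -sumr_const; apply: ler_sum => i _.
  by rewrite -real_normK ?num_real // lerXn2r ?nnegrE // ltW.
rewrite /enorm -(ger0_norm (ltW e_gt0)) -sqrtr_sqr ltr_sqrt ?exprn_gt0 //.
apply: le_lt_trans sum_le _; rewrite ec -natr1.
by have := ler0n R d; nra.
Qed.

Lemma edist_nbhs w (e : R) : 0 < e -> nbhs w [set v | Defs.edist v w < e].
Proof.
move=> e_gt0; have ed_gt0 : 0 < e / d.+1%:R by rewrite divr_gt0.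
by apply: filterS (box_nbhs w (fun=> ed_gt0)) => v; exact: enorm_lt.
Qed.

Lemma closed_nonneg_orthant : closed (@nonneg_orthant R d).
Proof.
have -> : @nonneg_orthant R d = \bigcap_(i in setT) (@proj _ (fun=> R) i @^-1` [set x | 0 <= x]).
  by apply/seteqP; split => v v_ge0 i /=; [move=> _; exact: v_ge0 | exact: v_ge0].
apply: closed_bigI => i _; apply: preimage_closed; last exact: closed_ge.
by move=> v _; exact: proj_continuous.
Qed.

Lemma closed_sum_eq1 : closed [set v : 'I_d -> R | \sum_(i < d) v i = 1].
Proof.
have sum_cont : continuous (fun v : 'I_d -> R => \sum_(i < d) v i).
  apply: continuous_big => [|i _]; first exact: add_continuous.
  exact: (@proj_continuous _ (fun=> R) i).
by have := preimage_closed (fun v _ => sum_cont v) (@closed_eq R 1); exact.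
Qed.

Lemma closed_in_orthant_closed A : closed_in_orthant A -> closed (A `&` @nonneg_orthant R d).
Proof.
move=> A_cl w w_cl.
have w_ge0 : nonneg_orthant w.
  by apply: closed_nonneg_orthant => B /w_cl[v [[_ v_ge0] Bv]]; exists v.
split => //; apply: contrapT => Aw.
have [e e_gt0 e_notA] := A_cl w w_ge0 Aw.
have [v [[Av v_ge0] vw]] := w_cl _ (edist_nbhs w e_gt0).
exact: e_notA vw Av.
Qed.

Lemma compact_cone_section (S : set ('I_d -> R)) :
  S `<=` @pos_orthant R d -> closed_in_orthant (S `|` [set @zero_pt R d]) ->
  compact (S `&` [set v | \sum_(i < d) v i = 1]).
Proof.
move=> S_pos S_cl.
have -> : S `&` [set v | \sum_(i < d) v i = 1] =
    (S `|` [set @zero_pt R d]) `&` @nonneg_orthant R d `&` [set v | \sum_(i < d) v i = 1].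
  apply/seteqP; split => v /=.
    by move=> [Sv v1]; split=> //; split; [left | move=> i; exact/ltW/S_pos].
  case=> [[[Sv|->] _] v1] //; move: v1.
  by rewrite /zero_pt big1 // => /eqP; rewrite eq_sym oner_eq0.
apply: (subclosed_compact _ (tychonoff (fun=> @segment_compact R 0 1))).
  exact: closedI (closed_in_orthant_closed S_cl) closed_sum_eq1.
move=> v [[_ v_ge0] v1] i /=; rewrite in_itv /= v_ge0 -v1.
exact: coord_le_sum.
Qed.

End OrthantTopology.

Lemma unit_cube_scale (R : realType) (d : nat) (t : R) (w : 'I_d -> R) :
  0 <= t <= 1 -> unit_cube w -> unit_cube (scale_pt t w).
Proof.
move=> /andP[t_ge0 t_le1] w01 i; have /andP[wi_ge0 wi_le1] := w01 i.
by rewrite /scale_pt mulr_ge0 //= mulr_ile1.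
Qed.

Section CompactComparison.
Variables (R : realType) (d : nat) (C1 C2 L1 L2 : ('I_d -> R) -> R).
Hypotheses (copC1 : is_copula C1) (copC2 : is_copula C2).
Hypotheses (tdf1 : is_tdf C1 L1) (tdf2 : is_tdf C2 L2) (lt12 : td_lt L1 L2).

Let copula_le_at (s : R) (v : 'I_d -> R) :=
  unit_cube (scale_pt s v) -> C1 (scale_pt s v) <= C2 (scale_pt s v).

Lemma copula_le_at_near (w : 'I_d -> R) : pos_orthant w -> unit_cube w ->
  \forall v \near w & s \near 0^'+, copula_le_at s v.
Proof.
move=> w_gt0 w01; have w_ge0 : nonneg_orthant w by move=> i; exact/ltW.
have [eta [eta_gt0 eta_lt1 near_lt]] := tdf_dilate_lt tdf1 tdf2 w_ge0 (lt12 w_gt0).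
(* v close to w in relative terms lies between the dilations (1 - eta) w and (1 + eta) w *)
exists ([set v | forall i, `|v i - w i| < eta * w i],
        [set s | [/\ 0 < s, s < 2^-1 &
           C1 (scale_pt (s * (1 + eta)) w) < C2 (scale_pt (s * (1 - eta)) w)]]).
  split; first by apply: box_nbhs => i; rewrite mulr_gt0.
  near=> s; split; last by near: s.
    by near: s; exact: nbhs_right_gt.
  by near: s; apply: nbhs_right_lt; rewrite invr_gt0.
case=> v s /= [vw [s_gt0 s_lt C12]] v01.
have [v_ge v_le] : (forall i, (1 - eta) * w i <= v i) /\ (forall i, v i <= (1 + eta) * w i).
  by split=> i; have := vw i; rewrite ltr_norml => /andP[]; nra.
have dil01 (c : R) : 0 <= c <= 2 -> unit_cube (scale_pt (s * c) w).
  move=> /andP[c_ge0 c_le2]; apply: unit_cube_scale => //.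
  by rewrite mulr_ge0 ?(ltW s_gt0) //=; nra.
have [dil_hi dil_lo] : 0 <= 1 + eta <= 2 /\ 0 <= 1 - eta <= 2 by split; apply/andP; split; lra.
apply: le_trans (ltW (le_lt_trans _ C12)) _.
  apply: (copula_le copC1 v01 (dil01 _ dil_hi)) => i.
  by rewrite /scale_pt -mulrA ler_pM2l.
apply: (copula_le copC2 (dil01 _ dil_lo) v01) => i.
by rewrite /scale_pt -mulrA ler_pM2l.
Unshelve. all: by end_near.
Qed.

Lemma compact_copula_le (K : set ('I_d -> R)) :
  compact K -> K `<=` @pos_orthant R d -> K `<=` @unit_cube R d ->
  \forall s \near 0^'+, forall v, K v -> copula_le_at s v.
Proof.
move=> K_cpt K_pos K01.
apply: (proj1 (compact_near_coveringP K) K_cpt) => w Kw.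
exact: copula_le_at_near (K_pos _ Kw) (K01 _ Kw).
Qed.

End CompactComparison.

Lemma tdf_lt_dim0 (R : realType) (C1 C2 L1 L2 : ('I_0 -> R) -> R) (u : 'I_0 -> R) :
  is_tdf C1 L1 -> is_tdf C2 L2 -> L1 u < L2 u -> C1 u < C2 u.
Proof.
move=> tdf1 tdf2 lt12; have u_ge0 : nonneg_orthant u by case.
have [eta [_ _ near_lt]] := tdf_dilate_lt tdf1 tdf2 u_ge0 lt12.
have scale_u s : scale_pt s u = u by apply: funext => -[].
by have [s] := filter_ex near_lt; rewrite !scale_u.
Qed.

Theorem mainTheorem5 (R : realType) (d : nat)
    (C1 C2 Lam1 Lam2 : ('I_d -> R) -> R) (S : set ('I_d -> R)) :
  is_copula C1 -> is_copula C2 ->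
  is_tdf C1 Lam1 -> is_tdf C2 Lam2 ->
  td_lt Lam1 Lam2 ->
  S `<=` @pos_orthant R d ->
  is_cone S ->
  closed_in_orthant (S `|` [set @zero_pt R d]) ->
  exists2 eps : R, 0 < eps &
    forall u, S u -> eball0 eps u -> unit_cube u -> C1 u <= C2 u.
Proof.
move=> copC1 copC2 tdf1 tdf2 lt12 S_pos S_cone S_cl.
have [d0|d_gt0] := posnP d.
  by exists 1 => // u _ _ _; subst d; apply/ltW/(tdf_lt_dim0 tdf1 tdf2)/lt12; case.
pose K := S `&` [set v | \sum_(i < d) v i = 1].
have K_pos : K `<=` @pos_orthant R d by move=> v [/S_pos].
have K01 : K `<=` @unit_cube R d.
  move=> v [/S_pos v_gt0 v1] i; have v_ge0 : nonneg_orthant v by move=> j; exact/ltW.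
  by rewrite v_ge0 -v1 coord_le_sum.
have [e e_gt0 e_le] := at_right0_interval
  (compact_copula_le copC1 copC2 tdf1 tdf2 lt12 (compact_cone_section S_pos S_cl) K_pos K01).
exists (e / d%:R) => [|u Su u_lt u01]; first by rewrite divr_gt0 ?ltr0n.
have u_ge0 : nonneg_orthant u by move=> i; exact: ltW (S_pos u Su i).
set s := \sum_(i < d) u i.
have s_gt0 : 0 < s := lt_le_trans (S_pos u Su (Ordinal d_gt0)) (coord_le_sum _ u_ge0).
have s_lt : s < e.
  by apply: le_lt_trans (sum_le_enorm u) _; rewrite mulrC -ltr_pdivlMr ?ltr0n.
have K_u : K (scale_pt s^-1 u).
  split; first by apply: S_cone; rewrite ?invr_gt0.
  by rewrite /scale_pt /= -mulr_sumr mulVf ?gt_eqF.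
have u_eq : scale_pt s (scale_pt s^-1 u) = u.
  by apply: funext => i; rewrite /scale_pt mulrA divff ?mul1r ?gt_eqF.
by have := e_le s s_gt0 s_lt _ K_u; rewrite u_eq; apply.
Qed.
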